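(* Let $b\ge 2$. For every finite nonempty string $I$ of base-$b$ digits there exist infinitely many $b$-wARH numbers whose base-$b$ representation contains $I$ as a contiguous substring.
   Context: Fix a base $b\ge 2$. $s_b(N)$ is the sum of the base-$b$ digits of $N$. For a positive integer $X$, its reversal $X^R$ is the integer whose base-$b$ representation is that of $X$ written in reverse order (leading zeros of the result are dropped). A positive integer $N$ is a $b$-wARH number if there exists an integer $A\ge 0$ such that $N=(A+s_b(N))+(A+s_b(N))^R$. *)

From mathcomp Require Import all_boot.
Set Implicit Arguments. Unset Strict Implicit. Unset Printing Implicit Defensive.

(* Base-b digits of n, least significant first; digits of 0 is [::]. *)
Fixpoint digits_le_aux (fuel b n : nat) : seq nat :=
  match fuel with
  | 0 => [::]
  | fuel'.+1 => if n == 0 then [::] else (n %% b) :: digits_le_aux fuel' b (n %/ b)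
  end.
Definition digits_le (b n : nat) : seq nat := digits_le_aux n.+1 b n.

Definition digits (b n : nat) : seq nat := rev (digits_le b n).

Definition from_digits (b : nat) (s : seq nat) : nat :=
  foldl (fun acc d => acc * b + d) 0 s.

Definition sb (b n : nat) : nat := sumn (digits_le b n).

(* X^R: reverse the base-b representation (leading zeros of result drop
   automatically when evaluating). *)
Definition revb (b x : nat) : nat := from_digits b (rev (digits b x)).

Definition wARH (b N : nat) : Prop :=
  0 < N /\ exists A : nat, N = (A + sb b N) + revb b (A + sb b N).

From mathcomp Require Import all_boot.
From mathcomp Require Import zify.

(* Put s := 1 :: I and let X be the number written s 0^k in
   base b, with k := m + |s| for a large padding length m.  Its reversal
   X^R is the number written rev s, so N := X + X^R is written
   s 0^m (rev s): no carries occur, and I visibly occurs in N.  The digit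
   sum of N is 2 * sumn s, a constant independent of m, whereas X >= b^k > k
   grows with m; for m large, A := X - s_b(N) >= 0 witnesses that N is
   b-wARH, and N >= X > m exceeds any prescribed bound. *)

Lemma from_digits_acc b a t :
  foldl (fun acc d => acc * b + d) a t = a * b ^ size t + from_digits b t.
Proof.
rewrite /from_digits; elim: t a => [|x t IH] a /=; first by rewrite muln1 addn0.
rewrite IH (IH x) expnS; lia.
Qed.

Lemma from_digits_cat b s t :
  from_digits b (s ++ t) = from_digits b s * b ^ size t + from_digits b t.
Proof. by rewrite /from_digits foldl_cat from_digits_acc. Qed.

Lemma from_digits_nseq0 b k : from_digits b (nseq k 0) = 0.
Proof. by rewrite /from_digits; elim: k => //= k; rewrite mul0n add0n. Qed.

Lemma from_digits_rcons b s x : from_digits b (rcons s x) = from_digits b s * b + x.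
Proof. by rewrite -cats1 from_digits_cat /= expn1. Qed.

Lemma from_digits_pos b d0 s : 0 < d0 -> 0 < b -> 0 < from_digits b (d0 :: s).
Proof.
move=> hd hb; elim/last_ind: s => [|s x IH]; first by [].
rewrite -rcons_cons from_digits_rcons; nia.
Qed.

(* Inserting a zero block between s and t adds |t| trailing zeros to s:
   this is the carry-free addition  s 0^(m+|t|) + t = s 0^m t. *)
Lemma from_digits_gap b s m t :
  from_digits b (s ++ nseq m 0 ++ t)
  = from_digits b (s ++ nseq (m + size t) 0) + from_digits b t.
Proof.
rewrite !from_digits_cat !from_digits_nseq0 mul0n add0n addn0 size_cat !size_nseq.
by [].
Qed.

Section DigitsOfValue.

Variable b : nat.
Hypothesis hb : 2 <= b.

Lemma digits_le_aux_fuel n f1 f2 : n < f1 -> n < f2 ->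
  digits_le_aux f1 b n = digits_le_aux f2 b n.
Proof.
elim: f1 n f2 => [|f1 IH] n [|f2] //= h1 h2.
case: eqP => // /eqP hn; congr (_ :: _).
have hdiv : n %/ b < n by apply: ltn_Pdiv => //; lia.
apply: IH; lia.
Qed.

Lemma digits_le_step v d : d < b -> 0 < v * b + d ->
  digits_le b (v * b + d) = d :: digits_le b v.
Proof.
move=> hd hp; rewrite [LHS]/digits_le /=.
have -> : (v * b + d == 0) = false by lia.
have hmod : (v * b + d) %% b = d by rewrite modnMDl modn_small.
have hdiv : (v * b + d) %/ b = v by rewrite divnMDl ?divn_small ?addn0 //; lia.
rewrite hmod hdiv; congr (_ :: _); apply: digits_le_aux_fuel; nia.
Qed.

Lemma digits_from_digits d0 s : 0 < d0 < b -> all (fun d => d < b) s ->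
  digits b (from_digits b (d0 :: s)) = d0 :: s.
Proof.
move=> /andP[h0 h1] hs; rewrite /digits; apply: (can_inj (@revK _)); rewrite revK.
elim/last_ind: s hs => [|s x IH].
  by move=> _; rewrite -[from_digits _ _]/(0 * b + d0) digits_le_step.
rewrite all_rcons => /andP[hx hs].
have hpos := @from_digits_pos b d0 s h0 (ltnW hb).
rewrite -rcons_cons from_digits_rcons digits_le_step //; last by nia.
by rewrite IH // rev_rcons.
Qed.

Lemma sb_digits n : sb b n = sumn (digits b n).
Proof. by rewrite /sb /digits sumn_rev. Qed.

Lemma revb_trailing_zeros d0 s k : 0 < d0 < b -> all (fun d => d < b) s ->
  revb b (from_digits b ((d0 :: s) ++ nseq k 0)) = from_digits b (rev (d0 :: s)).
Proof.
move=> hd0 hs; rewrite /revb cat_cons digits_from_digits //; last first.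
  by rewrite all_cat hs all_nseq; apply/orP; right; lia.
by rewrite -cat_cons rev_cat rev_nseq from_digits_cat from_digits_nseq0.
Qed.

End DigitsOfValue.

Lemma wARH_of_sum b X N : 0 < N -> N = X + revb b X -> sb b N <= X -> wARH b N.
Proof.
by move=> hN hNX hsb; split=> //; exists (X - sb b N); rewrite subnK.
Qed.

Theorem corollary5 (b : nat) (hb : 2 <= b) (I : seq nat)
  (hI : 0 < size I) (hdig : all (fun d => d < b) I) :
  forall M : nat, exists N : nat, M < N /\ wARH b N /\ infix I (digits b N).
Proof.
move=> M; set s := 1 :: I; set m := M + 2 * sumn s; set k := m + size s.
set X := from_digits b (s ++ nseq k 0).
set N := from_digits b (s ++ nseq m 0 ++ rev s).
have hb1 : 0 < 1 < b by lia.
have hNX : N = X + revb b X.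
  by rewrite /X revb_trailing_zeros // /N from_digits_gap size_rev.
have hdN : digits b N = s ++ nseq m 0 ++ rev s.
  rewrite /N cat_cons digits_from_digits // !all_cat hdig all_rev /= hdig andbT.
  by rewrite all_nseq hb andbT (ltnW hb) orbT.
have hsb : sb b N = 2 * sumn s by rewrite sb_digits hdN !sumn_cat sumn_nseq sumn_rev; lia.
have hXbig : k < X.
  have hpos : 0 < from_digits b s by apply: from_digits_pos; lia.
  have hk : k < b ^ k by apply: ltn_expl.
  by rewrite /X from_digits_cat from_digits_nseq0 addn0 size_nseq; nia.
exists N; split; [|split].
- rewrite hNX; lia.
- by apply: (@wARH_of_sum b X N _ hNX); [rewrite hNX | rewrite hsb]; lia.
- rewrite hdN /s -cat1s -catA; exact: infix_infix.
Qed.
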